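(* Let $T$ be a directed tree with at least one edge whose underlying undirected graph is a path or a caterpillar. Then $T$ has span $1$.
   Context: A directed tree is a DAG (directed acyclic graph) whose underlying undirected graph is a tree. A caterpillar is a tree such that removing all its leaves yields a path (possibly empty or a single vertex). An upward-planar layered drawing of a DAG $G$ maps each vertex $v$ to a point in the plane whose y-coordinate $y(v)$ is an integer, and each edge $(u,v)$ (directed from tail $u$ to head $v$) to a strictly y-monotone curve going upward from $u$ to $v$ (so $y(u)<y(v)$), such that no two edges intersect except at common endpoints. The span of an edge $(u,v)$ in such a drawing $\Gamma$ is $y(v)-y(u)$; the span of $\Gamma$ is the maximum span of its edges; the span of an upward-planar DAG is the minimum span over all its upward-planar layered drawings. No embedding is prescribed. *)

From Stdlib Require Import Reals ZArith.
From mathcomp Require Import all_boot.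

Set Implicit Arguments.
Unset Strict Implicit.
Unset Printing Implicit Defensive.

Section Graphs.
Variables (V : finType) (E : rel V).

Definition uadj : rel V := fun u v => E u v || E v u.

Definition udeg (v : V) : nat := #|[set w | uadj v w]|.

Definition is_dag : Prop := forall u v, E u v -> ~~ connect E v u.

(* the underlying undirected (multi)graph is a tree:
   no antiparallel pair (which would be a double edge), connected,
   and number of edges = number of vertices - 1 *)
Definition underlying_tree : Prop :=
  (forall u v, E u v -> ~~ E v u) /\
  (forall u v, connect uadj u v) /\
  #|[set p : V * V | E p.1 p.2]| = #|V| - 1.

Definition directed_tree : Prop := is_dag /\ underlying_tree.

(* the subgraph of the underlying undirected graph induced by S is a path
   (possibly empty or a single vertex): connected, |edges| = |S| - 1
   (so it is a tree), and maximum degree at most 2 *)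
Definition induced_is_path (S : {set V}) : Prop :=
  (forall u v, u \in S -> v \in S ->
     connect (fun a b => [&& uadj a b, a \in S & b \in S]) u v) /\
  #|[set p : V * V | [&& E p.1 p.2, p.1 \in S & p.2 \in S]]| = #|S| - 1 /\
  (forall v, v \in S -> #|[set w in S | uadj v w]| <= 2).

Definition underlying_is_path : Prop := induced_is_path [set: V].

Definition leaves : {set V} := [set v | udeg v == 1].

Definition underlying_is_caterpillar : Prop := induced_is_path (~: leaves).

Record drawing := Drawing {
  xc : V -> R;
  yc : V -> Z;
  curve : V -> V -> R -> R * R
}.

Definition pt (D : drawing) (v : V) : R * R := (xc D v, IZR (yc D v)).

Definition in01 (t : R) : Prop := Rle 0 t /\ Rle t 1.

Definition upward_planar_layered (D : drawing) : Prop :=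
  (forall u v, pt D u = pt D v -> u = v) /\
  (forall u v, E u v ->
     (yc D u < yc D v)%Z /\
     curve D u v R0 = pt D u /\ curve D u v R1 = pt D v /\
     (forall t, continuity_pt (fun s => fst (curve D u v s)) t) /\
     (forall t, continuity_pt (fun s => snd (curve D u v s)) t) /\
     (forall s t, in01 s -> in01 t -> Rlt s t ->
        Rlt (snd (curve D u v s)) (snd (curve D u v t))) /\
     (forall w s, in01 s -> curve D u v s = pt D w -> w = u \/ w = v)) /\
  (forall u v u' v', E u v -> E u' v' -> (u, v) <> (u', v') ->
     forall s t, in01 s -> in01 t -> curve D u v s = curve D u' v' t ->
       exists w, (w = u \/ w = v) /\ (w = u' \/ w = v') /\
                 curve D u v s = pt D w).

(* span of a drawing: maximum edge span (edge spans are positive) *)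
Definition drawing_span (D : drawing) : nat :=
  \max_(p : V * V | E p.1 p.2) Z.to_nat (yc D p.2 - yc D p.1).

Definition has_span (k : nat) : Prop :=
  (exists D, upward_planar_layered D /\ drawing_span D = k) /\
  (forall D, upward_planar_layered D -> k <= drawing_span D).

End Graphs.

From Stdlib Require Import Reals ZArith Lra Lia.
From mathcomp Require Import all_boot zify.

(* Order the spine (the whole path, or what is left of the caterpillar after
   removing its leaves) as s_0, ..., s_k, and attach every remaining vertex,
   which is a leaf, to its neighbour on the spine.  Consecutive spine vertices
   get levels differing by +1 or -1 according to the direction of the edge
   between them, and a leaf gets the level of its neighbour +1 or -1
   accordingly, so that every edge climbs exactly one level.  Put s_i at
   horizontal slot 2i and its leaves at slot 2i+1, and draw the edges as
   straight segments: edges with no common endpoint occupy disjoint slot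
   intervals, so two edges between the same two levels never cross. *)

Set Implicit Arguments.
Unset Strict Implicit.
Unset Printing Implicit Defensive.

Section StraightLineDrawing.
Local Open Scope R_scope.
Variables (V : finType) (E : rel V) (x : V -> R) (y : V -> Z).
Hypothesis x_inj : injective x.
Hypothesis y_edge : forall u v, E u v -> y v = (y u + 1)%Z.
Hypothesis x_sep : forall u v u' v', E u v -> E u' v' -> y u = y u' -> u <> u' -> v <> v' ->
  (x u < x u' /\ x v < x v') \/ (x u' < x u /\ x v' < x v).

(* For an edge of span one, [IZR (y u) + t] interpolates linearly between the endpoint heights. *)
Definition straight_drawing : drawing V :=
  Drawing x y (fun u v t => (x u + t * (x v - x u), IZR (y u) + t)).

Local Notation seg := (curve straight_drawing).

Lemma seg0 u v : seg u v 0 = pt straight_drawing u.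
Proof. by rewrite /pt /=; f_equal; ring. Qed.

Lemma seg1 u v : E u v -> seg u v 1 = pt straight_drawing v.
Proof. by move=> Euv; rewrite /pt /= (y_edge Euv) plus_IZR; f_equal; ring. Qed.

Lemma seg_at_vertex u v w t : E u v -> in01 t -> seg u v t = pt straight_drawing w ->
  (t = 0 /\ w = u) \/ (t = 1 /\ w = v).
Proof.
move=> Euv [t0 t1] [hx hy].
have ht : IZR (y w - y u) = t by rewrite minus_IZR; lra.
have [e|e] : (y w - y u = 0 \/ y w - y u = 1)%Z.
  by move: t0 t1; rewrite -ht => /le_IZR ? /le_IZR ?; lia.
- left; split; first by rewrite -ht e.
  by apply: x_inj; rewrite -hx -ht e; ring.
- right; split; first by rewrite -ht e.
  by apply: x_inj; rewrite -hx -ht e; ring.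
Qed.

Lemma convex_comb_pos a b s : 0 <= s -> s <= 1 -> 0 < a -> 0 < b -> 0 < (1 - s) * a + s * b.
Proof. by move=> s0 s1 a0 b0; nra. Qed.

Lemma seg_crossing u v u' v' : E u v -> E u' v' -> (u, v) <> (u', v') ->
  forall s t, in01 s -> in01 t -> seg u v s = seg u' v' t ->
  exists w, (w = u \/ w = v) /\ (w = u' \/ w = v') /\ seg u v s = pt straight_drawing w.
Proof.
move=> Euv Euv' neq s t [s0 s1] [t0 t1] hst; have [hx hy] := hst.
have hd : IZR (y u - y u') = t - s by rewrite minus_IZR; lra.
have [e|[e|e]] : (y u - y u' = -1 \/ y u - y u' = 0 \/ y u - y u' = 1)%Z.
  have lo : IZR (-1) <= IZR (y u - y u') by rewrite hd; lra.
  have hi : IZR (y u - y u') <= IZR 1 by rewrite hd; lra.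
  by move/le_IZR: lo; move/le_IZR: hi; lia.
- have [es et] : s = 1 /\ t = 0 by rewrite e in hd; lra.
  have vu' : v = u' by apply: x_inj; move: hx; rewrite es et; lra.
  by exists v; split; [right | split; [left | rewrite es seg1]].
- have ts : t = s by rewrite e in hd; lra.
  have yu : y u = y u' by lia.
  subst t; case: (eqVneq u u') => [eu|nu]; case: (eqVneq v v') => [ev|nv].
  + by case: neq; rewrite eu ev.
  + subst u'; have es : s = 0.
      have xv : x v <> x v' by move/x_inj; apply/eqP.
      by apply: Rmult_eq_reg_r (_ : x v - x v' <> 0); lra.
    by exists u; split; [left | split; [left | rewrite es seg0]].
  + subst v'; have es : s = 1.
      have xu : x u <> x u' by move/x_inj; apply/eqP.
      by apply: Rmult_eq_reg_r (_ : x u - x u' <> 0); lra.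
    by exists v; split; [right | split; [right | rewrite es seg1]].
  + exfalso; move/eqP: nu; move/eqP: nv => nv nu.
    case: (x_sep Euv Euv' yu nu nv) => [[a b]|[a b]].
    * have : 0 < x u' - x u /\ 0 < x v' - x v by lra.
      by case=> /(convex_comb_pos s0 s1) h /h; lra.
    * have : 0 < x u - x u' /\ 0 < x v - x v' by lra.
      by case=> /(convex_comb_pos s0 s1) h /h; lra.
- have [es et] : s = 0 /\ t = 1 by rewrite e in hd; lra.
  have uv' : u = v' by apply: x_inj; move: hx; rewrite es et; lra.
  by exists u; split; [left | split; [right | rewrite es seg0]].
Qed.

Lemma straight_drawing_upward_planar : upward_planar_layered E straight_drawing.
Proof.
split; first by move=> u v [/x_inj ->].
split; last exact: seg_crossing.
move=> u v Euv; split; first by rewrite /= (y_edge Euv); lia.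
split; first exact: seg0.
split; first exact: seg1.
split.
  move=> t /=; apply: continuity_pt_plus; first exact: continuity_pt_const.
  apply: continuity_pt_mult; last exact: continuity_pt_const.
  exact: derivable_continuous_pt (derivable_pt_id t).
split.
  move=> t /=; apply: continuity_pt_plus; first exact: continuity_pt_const.
  exact: derivable_continuous_pt (derivable_pt_id t).
split; first by move=> s t _ _ /=; lra.
by move=> w s hs /(seg_at_vertex Euv hs) [[_ ->]|[_ ->]]; [left | right].
Qed.

Lemma straight_drawing_span u v : E u v -> drawing_span E straight_drawing = 1%nat.
Proof.
have span1 p : E p.1 p.2 -> Z.to_nat (y p.2 - y p.1) = 1%nat.
  by move/y_edge=> ->; rewrite Z.add_simpl_l.
move=> Euv; apply/eqP; rewrite eqn_leq; apply/andP; split.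
- by apply/bigmax_leqP => p /span1 ->.
- by rewrite -(span1 (u, v) Euv); exact: leq_bigmax_cond.
Qed.

End StraightLineDrawing.

Lemma has_span1 (V : finType) (E : rel V) (D : drawing V) u v : E u v ->
  upward_planar_layered E D -> drawing_span E D = 1 -> has_span E 1.
Proof.
move=> Euv upD spanD; split; first by exists D.
move=> D' [_ [edge _]]; apply: leq_trans (leq_bigmax_cond (u, v) Euv) => /=.
by have [? _] := edge u v Euv; lia.
Qed.

Definition consec (T : eqType) (s : seq T) (a b : T) :=
  [&& a \in s, b \in s & index b s == (index a s).+1].

Section SpineLayout.
Variables (V : finType) (E : rel V) (x0 : V) (s : seq V) (nb : V -> V).
Hypothesis E_asym : forall u v, E u v -> ~~ E v u.
Hypothesis nb_spine : forall v, v \notin s -> nb v \in s.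
Hypothesis edge_spine : forall a b, E a b ->
  [\/ consec s a b, consec s b a, (a \notin s) && (b == nb a) | (b \notin s) && (a == nb b)].

Definition edge_sign (a b : V) : Z := if E a b then 1%Z else (-1)%Z.

Fixpoint spine_level (i : nat) : Z :=
  if i is j.+1 then (spine_level j + edge_sign (nth x0 s j) (nth x0 s i))%Z else 0%Z.

Definition level (v : V) : Z :=
  if v \in s then spine_level (index v s)
  else (spine_level (index (nb v) s) + edge_sign (nb v) v)%Z.

Lemma level_consec a b : consec s a b -> level b = (level a + edge_sign a b)%Z.
Proof.
case/and3P=> sa sb /eqP ib.
by rewrite /level sa sb ib /= -ib !nth_index.
Qed.

Lemma level_edge u v : E u v -> level v = (level u + 1)%Z.
Proof.
move=> Euv; have Evu := negbTE (E_asym Euv).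
case: (edge_spine Euv) => [/level_consec->|/level_consec->|/andP[su /eqP ev]|/andP[sv /eqP eu]].
- by rewrite /edge_sign Euv.
- by rewrite /edge_sign Evu; lia.
- have vs : v \in s by rewrite ev nb_spine.
  by rewrite /level (negbTE su) vs -ev /edge_sign Evu; lia.
- have us : u \in s by rewrite eu nb_spine.
  by rewrite /level (negbTE sv) us -eu /edge_sign Euv.
Qed.

Definition slot (v : V) : nat :=
  if v \in s then (index v s).*2 else (index (nb v) s).*2.+1.

Lemma slot_spine v : v \in s -> slot v = (index v s).*2.
Proof. by rewrite /slot => ->. Qed.

Lemma slot_spine_inj v w : v \in s -> slot w = slot v -> w = v.
Proof.
move=> vs; rewrite /slot vs; case: ifP => ws e.
- by apply: (index_inj x0 ws vs); lia.
- by move: (congr1 odd e); rewrite /= !odd_double.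
Qed.

Lemma slot_edge a b : E a b -> exists l h,
  [/\ l \in s, slot l < slot h <= (slot l).+2 & (l, h) = (a, b) \/ (l, h) = (b, a)].
Proof.
move=> Eab; rewrite /slot; case: (edge_spine Eab).
- case/and3P=> sa sb /eqP ib; exists a, b; rewrite sa sb ib; split => //; [lia | by left].
- case/and3P=> sb sa /eqP ia; exists b, a; rewrite sa sb ia; split => //; [lia | by right].
- case/andP=> sa /eqP eb; have sb : b \in s by rewrite eb nb_spine.
  by exists b, a; rewrite sb (negbTE sa) -eb; split => //; [lia | right].
- case/andP=> sb /eqP ea; have sa : a \in s by rewrite ea nb_spine.
  by exists a, b; rewrite sa (negbTE sb) -ea; split => //; [lia | left].
Qed.

Lemma slots_separated l h l' h' : l \in s -> l' \in s ->
  slot l < slot h <= (slot l).+2 -> slot l' < slot h' <= (slot l').+2 ->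
  l' <> l -> l' <> h -> l <> h' -> slot h < slot l' \/ slot h' < slot l.
Proof.
move=> ls ls' lh lh' nl nl' nl''.
have ne : slot l' <> slot l by move/(slot_spine_inj ls).
have ne' : slot h <> slot l' by move/(slot_spine_inj ls')/esym.
have ne'' : slot h' <> slot l by move/(slot_spine_inj ls)/esym.
move: lh lh' ne ne' ne''; rewrite !(slot_spine ls) !(slot_spine ls'); lia.
Qed.

(* [enum_rank] separates the leaves sharing a slot. *)
Definition xpos (v : V) : R := INR (slot v * #|V| + enum_rank v).

Lemma xpos_inj : injective xpos.
Proof.
move=> a b /INR_eq /(congr1 (modn^~ #|V|)).
by rewrite !modnMDl !modn_small // => /val_inj/enum_rank_inj.
Qed.

Lemma xpos_lt a b : slot a < slot b -> Rlt (xpos a) (xpos b).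
Proof.
move=> ab; apply/lt_INR/ltP.
have : (slot a).+1 * #|V| <= slot b * #|V| by rewrite leq_mul2r ab orbT.
have ra : enum_rank a < #|V| by [].
by rewrite mulSn; lia.
Qed.

Lemma xpos_sep u v u' v' : E u v -> E u' v' -> level u = level u' -> u <> u' -> v <> v' ->
  (Rlt (xpos u) (xpos u') /\ Rlt (xpos v) (xpos v')) \/
  (Rlt (xpos u') (xpos u) /\ Rlt (xpos v') (xpos v)).
Proof.
move=> Euv Euv' yu nu nv.
have nuv' : u <> v' by move=> e; move: (level_edge Euv'); rewrite -e -yu; lia.
have nvu' : v <> u' by move=> e; move: (level_edge Euv); rewrite e yu; lia.
have [l [h [ls lh e]]] := slot_edge Euv.
have [l' [h' [ls' lh' e']]] := slot_edge Euv'.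
have [hl'|h'l] : slot h < slot l' \/ slot h' < slot l.
  by apply: slots_separated => //; case: e => -[? ?]; case: e' => -[? ?]; subst; congruence.
- by left; split; apply: xpos_lt; case: e => -[? ?]; case: e' => -[? ?]; subst; lia.
- by right; split; apply: xpos_lt; case: e => -[? ?]; case: e' => -[? ?]; subst; lia.
Qed.

Lemma spine_layout_span1 u v : E u v -> has_span E 1.
Proof.
move=> Euv; apply: (has_span1 Euv (straight_drawing_upward_planar xpos_inj level_edge xpos_sep)).
exact (straight_drawing_span xpos level_edge Euv).
Qed.

End SpineLayout.

Lemma index_rev (T : eqType) (s : seq T) x : uniq s -> x \in s ->
  index x (rev s) = size s - (index x s).+1.
Proof.
move=> us xs; have hi : index x s < size s by rewrite index_mem.
have e : nth x s (index x s) = nth x (rev s) (size s - (index x s).+1).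
  by rewrite nth_rev; [congr nth | ]; lia.
by rewrite -{1}(nth_index x xs) e index_uniq ?rev_uniq ?size_rev //; lia.
Qed.

Lemma consec_rev (T : eqType) (s : seq T) a b : uniq s -> consec (rev s) a b = consec s b a.
Proof.
move=> us; rewrite /consec !mem_rev.
case sa: (a \in s); case sb: (b \in s) => //=.
have := index_mem a s; have := index_mem b s; rewrite sa sb !index_rev // => ? ?.
by apply/eqP/eqP; lia.
Qed.

Lemma consec_cons (T : eqType) (t : seq T) v a b : a != v -> b != v ->
  consec (v :: t) a b = consec t a b.
Proof.
move=> av bv; have va : (v == a) = false by rewrite eq_sym (negbTE av).
have vb : (v == b) = false by rewrite eq_sym (negbTE bv).
by rewrite /consec /= !inE va vb (negbTE av) (negbTE bv) /= eqSS.
Qed.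

Lemma consec_head (T : eqType) (t : seq T) v w b : v != w ->
  consec [:: v, w & t] v b = (b == w).
Proof.
move=> vw; rewrite /consec /= !inE eqxx /=.
case: (eqVneq v b) => [<-|_]; first by rewrite andbF (negbTE vw).
case: (eqVneq w b) => [<-|wb]; first by rewrite !eqxx.
by rewrite /= andbF.
Qed.

Lemma consec_to_head (T : eqType) (t : seq T) v a : consec (v :: t) a v = false.
Proof. by rewrite /consec /= eqxx !andbF. Qed.

Lemma uadj_sym (V : finType) (E : rel V) : symmetric (uadj E).
Proof. by move=> a b; rewrite /uadj orbC. Qed.

Section PathOrder.
Variables (V : finType) (E : rel V).
Hypothesis E_asym : forall u v, E u v -> ~~ E v u.
Implicit Types (S : {set V}) (s t : seq V).

Lemma uadj_irr a : ~~ uadj E a a.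
Proof. by rewrite /uadj orbb; apply/negP => Eaa; move: (E_asym Eaa); rewrite Eaa. Qed.

Definition nbhd (S : {set V}) v := [set w in S | uadj E v w].

Definition edges_in (S : {set V}) := [set p : V * V | [&& E p.1 p.2, p.1 \in S & p.2 \in S]].

Definition uadj_in (S : {set V}) : rel V := fun a b => [&& uadj E a b, a \in S & b \in S].

Definition induced_connected (S : {set V}) :=
  forall a b, a \in S -> b \in S -> connect (uadj_in S) a b.

Lemma card_edges_in (S : {set V}) : #|edges_in S| = \sum_(v in S) \sum_(w in S) E v w.
Proof.
rewrite -sum1_card big_mkcond /= [RHS]big_mkcond /=.
rewrite [RHS](eq_bigr (fun v => \sum_w ((v \in S) && (w \in S) && E v w : nat))); last first.
  move=> v _; case vS: (v \in S); last by rewrite big1.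
  by rewrite big_mkcond /=; apply: eq_bigr => w _; case: (w \in S).
rewrite pair_big /=; apply: eq_bigr => -[a b] _ /=.
by rewrite inE /=; case: (E a b); case: (a \in S); case: (b \in S).
Qed.

Lemma sum_card_nbhd (S : {set V}) : \sum_(v in S) #|nbhd S v| = (#|edges_in S|).*2.
Proof.
have deg v : #|nbhd S v| = \sum_(w in S) E v w + \sum_(w in S) E w v.
  rewrite -sum1_card (eq_bigl (fun w => (w \in S) && uadj E v w)); last by move=> w; rewrite inE.
  rewrite big_mkcondr /= -big_split /=; apply: eq_bigr => w _.
  rewrite /uadj; case Evw: (E v w); case Ewv: (E w v) => //.
  by move: (E_asym Evw); rewrite Ewv.
rewrite (eq_bigr _ (fun v _ => deg v)) big_split /= -addnn card_edges_in.
by congr (_ + _); exact: exchange_big.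
Qed.

Lemma exists_low_degree S : induced_is_path E S -> 0 < #|S| ->
  exists2 v, v \in S & #|nbhd S v| <= 1.
Proof.
case=> _ [cardS _] S0.
case: (boolP [exists v in S, #|nbhd S v| <= 1]) => [/exists_inP[v vS dv]|]; first by exists v.
rewrite negb_exists_in => /forall_inP deg2.
have : \sum_(v in S) 2 <= \sum_(v in S) #|nbhd S v|.
  by apply: leq_sum => v /deg2; rewrite -ltnNge.
by rewrite sum_card_nbhd sum_nat_const [#|edges_in S|]cardS; lia.
Qed.

Lemma induced_connected_del S v : induced_connected S -> v \in S -> #|nbhd S v| <= 1 ->
  induced_connected (S :\ v).
Proof.
move=> conS vS /card_le1_eqP nb1 a b; rewrite !inE => /andP[av aS] /andP[bv bS].
case/connectP: (conS a b aS bS) => p pp eb; move: eb.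
case/shortenP: pp => p' pp' up' _ eb.
have vp' : v \notin a :: p'.
  rewrite inE eq_sym (negbTE av) /=; apply/negP => vp'.
  move: pp' up' eb; case/splitPr: vp' => p1 p2 pp' up' eb.
  case: p2 pp' up' eb => [|d p3] pp' up' eb; first by move: bv; rewrite eb last_cat eqxx.
  rewrite cat_path /= in pp'; case/and3P: pp' => _ /and3P[cv cS _] /andP[/and3P[vd _ dS] _].
  have cd : last a p1 = d.
    by apply: nb1; rewrite inE ?cS ?dS ?vd // uadj_sym.
  move: up'; rewrite -cat_cons cat_uniq => /and3P[_ /hasPn/(_ d)].
  by rewrite !inE eqxx orbT -cd => /(_ isT); rewrite -in_cons mem_last.
apply/connectP; exists p' => //.
have p'v : all (predC (pred1 v)) (a :: p') by rewrite all_predC has_pred1.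
apply: (sub_in_path _ p'v pp') => x y; rewrite !inE /= => xv yv /and3P[xy xS yS].
by rewrite /uadj_in xy !inE xv yv xS yS.
Qed.

Lemma nbhd_del S v w : nbhd (S :\ v) w = nbhd S w :\ v.
Proof. by apply/setP => x; rewrite !inE andbA. Qed.

Lemma card_edges_in_del S v w : v \in S -> nbhd S v = [set w] ->
  #|edges_in S| = (#|edges_in (S :\ v)|).+1.
Proof.
move=> vS nbv; have /setIdP[wS adj_vw] : w \in nbhd S v by rewrite nbv set11.
have nbw x : x \in S -> uadj E v x -> x = w.
  by move=> xS vx; apply/set1P; rewrite -nbv inE xS vx.
pose e := if E v w then (v, w) else (w, v).
have -> : edges_in S = e |: edges_in (S :\ v).
  apply/setP => -[a b]; rewrite in_setU1; apply/idP/idP => [abS|].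
    move: (abS); rewrite inE /= => /and3P[Eab aS bS].
    case: (eqVneq a v) => [av|av].
      have bw : b = w by apply: nbw; rewrite // -av /uadj Eab.
      by rewrite /e -av -bw Eab eqxx.
    case: (eqVneq b v) => [bv|bv].
      have aw : a = w by apply: nbw; rewrite // -bv /uadj Eab orbT.
      by rewrite /e -bv -aw (negbTE (E_asym Eab)) eqxx.
    by rewrite !inE Eab av bv aS bS orbT.
  case/orP => [/eqP->|]; last first.
    by rewrite !inE => /and3P[Eab /andP[_ aS] /andP[_ bS]]; rewrite Eab aS bS.
  by rewrite /e inE; case: ifP => /= Evw; rewrite vS wS ?andbT //; move: adj_vw; rewrite /uadj Evw.
rewrite cardsU1 /e !inE; case: ifP => _ /=; by rewrite eqxx ?andbF.
Qed.

Lemma induced_path_del S v w : induced_is_path E S -> v \in S -> nbhd S v = [set w] ->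
  induced_is_path E (S :\ v).
Proof.
case=> conS [cardS degS] vS nbv; split.
  by apply: induced_connected_del => //; rewrite nbv cards1.
split.
  change (#|edges_in (S :\ v)| = #|S :\ v| - 1).
  by move: cardS; rewrite [#|edges_in S|](card_edges_in_del vS nbv) (cardsD1 v S) vS; lia.
move=> x /setD1P[_ xS]; apply: leq_trans (degS x xS).
by change (#|nbhd (S :\ v) x| <= #|nbhd S x|); rewrite nbhd_del subset_leq_card ?subsetDl.
Qed.

Lemma exists_leaf S : induced_is_path E S -> 1 < #|S| ->
  exists v w, v \in S /\ nbhd S v = [set w].
Proof.
move=> pathS S1; have [v vS deg1] := exists_low_degree pathS (ltnW S1).
have : 0 < #|S :\ v| by rewrite (cardsD1 v S) vS in S1.
case/card_gt0P => u /setD1P[uv uS].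
case/connectP: (pathS.1 v u vS uS) => -[|c p] /=; first by move=> _ eu; rewrite eu eqxx in uv.
case/andP=> /and3P[vc _ cS] _ _.
have : #|nbhd S v| == 1 by rewrite eqn_leq deg1; apply/card_gt0P; exists c; rewrite inE cS vc.
by case/cards1P => w nbv; exists v, w.
Qed.

Definition path_order S s := [/\ uniq s, s =i S,
  {in S &, forall a b, E a b -> consec s a b || consec s b a} &
  forall a b, consec s a b -> uadj E a b].

Lemma path_order_rev S s : path_order S s -> path_order S (rev s).
Proof.
case=> us sS edge adj; split.
- by rewrite rev_uniq.
- by move=> x; rewrite mem_rev sS.
- by move=> a b aS bS Eab; rewrite !consec_rev // orbC; apply: edge.
- by move=> a b; rewrite consec_rev // uadj_sym; apply: adj.
Qed.

Lemma path_order_small S : #|S| <= 1 -> path_order S (enum S).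
Proof.
move/card_le1_eqP => S1; split.
- exact: enum_uniq.
- exact: mem_enum.
- by move=> a b aS bS; rewrite (S1 a b aS bS) /uadj; move=> Ebb; move: (E_asym Ebb); rewrite Ebb.
- move=> a b /and3P[aS bS /eqP]; rewrite !mem_enum in aS bS.
  by rewrite (S1 a b aS bS) => ?; exfalso; lia.
Qed.

Lemma path_order_end S s w : path_order S s -> w \in S -> #|nbhd S w| <= 1 ->
  index w s = 0 \/ index w s = (size s).-1.
Proof.
case=> us sS _ adj; rewrite -sS => ws /card_le1_eqP nb1.
have : index w s < size s by rewrite index_mem.
case iw: (index w s) => [|i] ilt; [by left | right].
case: (ltnP i.+2 (size s)) => [ilt'|]; last by lia.
have ia : index (nth w s i) s = i by rewrite index_uniq // ltnW.
have ib : index (nth w s i.+2) s = i.+2 by rewrite index_uniq.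
have a_nb : nth w s i \in nbhd S w.
  rewrite inE -sS mem_nth 1?uadj_sym ?adj //=; last by lia.
  by rewrite /consec mem_nth ?ws ?iw ?ia ?eqxx // ltnW.
have b_nb : nth w s i.+2 \in nbhd S w.
  by rewrite inE -sS mem_nth ?adj // /consec mem_nth ?ws ?iw ?ib ?eqxx.
by move: ib; rewrite (nb1 _ _ a_nb b_nb) ia; lia.
Qed.

Lemma path_order_start S s w : path_order S s -> w \in S -> #|nbhd S w| <= 1 ->
  exists t, path_order S (w :: t).
Proof.
move=> ord wS deg1; have [us sS _ _] := ord.
have ws : w \in s by rewrite sS.
suff [t' [ord' iw]] : exists t', path_order S t' /\ index w t' = 0.
  have wt' : w \in t' by case: ord' => _ ->.
  by exists (behead t'); case: t' ord' iw wt' => //= x t'; case: eqP => // <-.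
case: (path_order_end ord wS deg1) => iw; first by exists s.
exists (rev s); split; first exact: path_order_rev.
have s0 : 0 < size s by rewrite lt0n size_eq0; apply: contraTneq ws => ->.
by rewrite index_rev // iw prednK ?subnn.
Qed.

Lemma path_order_cons S v w t : v \in S -> nbhd S v = [set w] ->
  path_order (S :\ v) (w :: t) -> path_order S [:: v, w & t].
Proof.
move=> vS nbv [ut tS edge adj].
have /setIdP[wS vw] : w \in nbhd S v by rewrite nbv set11.
have nbw x : x \in S -> uadj E v x -> x = w.
  by move=> xS vx; apply/set1P; rewrite -nbv inE xS vx.
have vt : v \notin w :: t by rewrite tS !inE eqxx.
have wv : v != w by apply: contraTneq vw => <-; exact: uadj_irr.
split.
- by rewrite cons_uniq vt ut.
- by move=> x; rewrite inE tS !inE; case: eqVneq => // ->.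
- move=> a b aS bS Eab; case: (eqVneq a v) => [av|av].
    by rewrite av consec_head // (nbw b bS) ?eqxx // -av /uadj Eab.
  case: (eqVneq b v) => [bv|bv].
    by rewrite bv consec_head // (nbw a aS) ?eqxx ?orbT // -bv /uadj Eab orbT.
  by rewrite (consec_cons _ av bv) (consec_cons _ bv av) edge // !inE ?av ?bv.
- move=> a b; case: (eqVneq a v) => [->|av].
    by rewrite consec_head // => /eqP->.
  case: (eqVneq b v) => [->|bv]; first by rewrite consec_to_head.
  by rewrite consec_cons //; apply: adj.
Qed.

Lemma induced_path_order S : induced_is_path E S -> exists s, path_order S s.
Proof.
move Hn : #|S| => n; elim: n S Hn => [|n IH] S cardS pathS.
  by exists (enum S); apply: path_order_small; rewrite cardS.
case: (leqP #|S| 1) => [S1|S1]; first by exists (enum S); exact: path_order_small.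
have [v [w [vS nbv]]] := exists_leaf pathS S1.
have pathS' := induced_path_del pathS vS nbv.
have cardS' : #|S :\ v| = n by move: cardS; rewrite (cardsD1 v S) vS add1n; case.
have [s ord] := IH (S :\ v) cardS' pathS'.
have /setIdP[wS vw] : w \in nbhd S v by rewrite nbv set11.
have wS' : w \in S :\ v by rewrite !inE wS andbT; apply: contraTneq vw => ->; exact: uadj_irr.
have deg_w : #|nbhd (S :\ v) w| <= 1.
  have deg2 : #|nbhd S w| <= 2 := pathS.2.2 w wS.
  by move: deg2; rewrite nbhd_del (cardsD1 v (nbhd S w)) inE vS uadj_sym vw.
have [t ord'] := path_order_start ord wS' deg_w.
by exists [:: v, w & t]; exact: path_order_cons.
Qed.

End PathOrder.

Section Leaves.
Variables (V : finType) (E : rel V).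
Hypothesis E_asym : forall u v, E u v -> ~~ E v u.
Hypothesis uadj_connected : forall u v, connect (uadj E) u v.

Definition leaf_nb (v : V) : V := odflt v [pick w | uadj E v w].

Lemma leaf_nbP v w : udeg E v = 1 -> uadj E v w = (w == leaf_nb v).
Proof.
rewrite /udeg => /eqP/cards1P[z nbz].
have adj x : uadj E v x = (x == z) by rewrite -in_set1 -nbz inE.
rewrite adj /leaf_nb; case: pickP => [z'|none]; first by rewrite adj => /eqP->.
by move: (none z); rewrite adj eqxx.
Qed.

Lemma adjacent_leaves_cover a b : udeg E a = 1 -> udeg E b = 1 -> uadj E a b ->
  forall c, c = a \/ c = b.
Proof.
move=> la lb ab c.
have ba : uadj E b a by rewrite uadj_sym.
have fwd x y : uadj E x y -> x \in [set a; b] -> y \in [set a; b].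
  move=> xy; rewrite !inE => /orP[] /eqP ex; subst x.
  - by move: ab xy; rewrite !(leaf_nbP _ la) => /eqP<- /eqP->; rewrite eqxx orbT.
  - by move: ba xy; rewrite !(leaf_nbP _ lb) => /eqP<- /eqP->; rewrite eqxx.
have cl : closed (uadj E) (mem [set a; b]).
  by move=> x y xy /=; apply/idP/idP; apply: fwd; rewrite // uadj_sym.
move: (closed_connect cl (uadj_connected a c)); rewrite !inE eqxx /=.
by move/esym/orP => [] /eqP; [left | right].
Qed.

Definition leaf_spine (s : seq V) :=
  (forall v, v \notin s -> udeg E v = 1 /\ leaf_nb v \in s) /\
  {in s &, forall a b, E a b -> consec s a b || consec s b a}.

Lemma leaf_spine_span1 s u v : leaf_spine s -> E u v -> has_span E 1.
Proof.
case=> offs ins; apply: (spine_layout_span1 u E_asym (nb := leaf_nb)).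
  by move=> x /offs[].
move=> a b Eab; case sa: (a \in s); last first.
  have [la _] := offs a (negbT sa).
  by apply: Or43; rewrite -leaf_nbP // /uadj Eab.
case sb: (b \in s); last first.
  have [lb _] := offs b (negbT sb).
  by apply: Or44; rewrite -leaf_nbP // /uadj Eab orbT.
by case/orP: (ins a b sa sb Eab) => ?; [apply: Or41 | apply: Or42].
Qed.

Lemma path_order_leaf_spine S s : path_order E S s -> S != set0 ->
  (forall v, v \notin S -> udeg E v = 1) -> leaf_spine s.
Proof.
case=> _ sS edges _ S0 offS; split; last by move=> a b; rewrite !sS; apply: edges.
move=> v; rewrite sS => vS; have lv := offS v vS; split => //.
rewrite sS; apply: contraT => nbS; have lnb := offS _ nbS.
have [x xS] := set0Pn _ S0.
have vnb : uadj E v (leaf_nb v) by rewrite leaf_nbP.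
by case: (adjacent_leaves_cover lv lnb vnb x) => ex; move: xS; rewrite ex ?(negbTE vS) ?(negbTE nbS).
Qed.

Lemma leaf_spine_single u v : E u v -> udeg E u = 1 -> udeg E v = 1 -> leaf_spine [:: u].
Proof.
move=> Euv lu lv; have uv : uadj E u v by rewrite /uadj Euv.
split.
- move=> x; rewrite inE; case: (adjacent_leaves_cover lu lv uv x) => ->; first by rewrite eqxx.
  by split; rewrite // inE eq_sym -leaf_nbP // uadj_sym.
- move=> a b; rewrite !inE => /eqP-> /eqP-> Euu.
  by move: (E_asym Euu); rewrite Euu.
Qed.

End Leaves.

Theorem mainTheorem7 (V : finType) (E : rel V) :
  directed_tree E ->
  (exists u v, E u v) ->
  (underlying_is_path E \/ underlying_is_caterpillar E) ->
  has_span E 1.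
Proof.
move=> [_ [asym [conn _]]] [u [v Euv]] shape.
suff [s spine] : exists s, leaf_spine E s by exact (leaf_spine_span1 asym spine Euv).
case: shape => [pathT|cat].
  have [s ord] := induced_path_order asym pathT.
  exists s; apply: (path_order_leaf_spine conn ord) => [|x]; last by rewrite inE.
  by apply/set0Pn; exists u.
have [noint|int] := eqVneq (~: leaves E) set0.
  have leaf x : udeg E x = 1 by move: (in_set0 x); rewrite -noint !inE => /negbFE/eqP.
  by exists [:: u]; exact (leaf_spine_single asym conn Euv (leaf u) (leaf v)).
have [s ord] := induced_path_order asym cat.
by exists s; apply: (path_order_leaf_spine conn ord int) => x; rewrite !inE negbK => /eqP.
Qed.
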